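(* Assume the standing setup below, fix $T_1\in(0,1)$ and $q\in(0,1]$, and regard $\psi$ as a function of $T_2\in(0,1)$. Then for every $T_2$ with $\psi(T_2)\in[0,1)$, $\psi$ is differentiable at $T_2$ and $\frac{d\psi}{dT_2}<0$.
   Context: Standing setup. $P$ is a probability distribution on $\{0,1,\dots,k_{\max}\}$ with mean $\langle k\rangle=\sum_k kP(k)>0$; $Q(k)=(k+1)P(k+1)/\langle k\rangle$ for $k\ge0$. For $q\in[0,1]$ set $P_q(k_1,k_2)=\binom{k_1+k_2}{k_2}q^{k_2}(1-q)^{k_1}P(k_1+k_2)$ and $Q_q(k_1,k_2)=\binom{k_1+k_2}{k_2}q^{k_2}(1-q)^{k_1}Q(k_1+k_2)$ (with $0^0=1$). For $T_1,T_2\in(0,1)$ and $u\in[0,1]$ let $F(u)=\sum_{k_1,k_2}(1+(u-1)T_1)^{k_1}(1+(u-1)T_2)^{k_2}Q_q(k_1,k_2)$ and $G(u)=\sum_{k_1,k_2}(1+(u-1)T_1)^{k_1}(1+(u-1)T_2)^{k_2}P_q(k_1,k_2)$. Let $u^*$ be the smallest solution in $[0,1]$ of $u=F(u)$ and $\psi=G(u^* )$; with $T_1,q$ fixed, $u^*$ and $\psi$ are functions of $T_2$. *)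

From Stdlib Require Import Reals ClassicalEpsilon.
Open Scope R_scope.

(* P is a distribution on {0,...,kmax}: represented as P : nat -> R with
   P k = 0 for k > kmax (hypotheses are stated in the theorem). *)

Definition meank (P : nat -> R) (kmax : nat) : R :=
  sum_f_R0 (fun k => INR k * P k) kmax.

Definition Qd (P : nat -> R) (kmax : nat) (k : nat) : R :=
  INR (k + 1) * P (S k) / meank P kmax.

Definition thin (D : nat -> R) (q : R) (k1 k2 : nat) : R :=
  C (k1 + k2) k2 * q ^ k2 * (1 - q) ^ k1 * D (k1 + k2)%nat.

Definition Pq P q := thin P q.
Definition Qq P kmax q := thin (Qd P kmax) q.

(* The double sum over k1,k2 in {0..kmax} contains every nonzero term of the
   (formally infinite) sum, since P_q(k1,k2)=0 when k1+k2>kmax and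
   Q_q(k1,k2)=0 when k1+k2>=kmax. *)
Definition genf (D2 : nat -> nat -> R) (kmax : nat) (T1 T2 u : R) : R :=
  sum_f_R0 (fun k1 =>
    sum_f_R0 (fun k2 =>
      (1 + (u - 1) * T1) ^ k1 * (1 + (u - 1) * T2) ^ k2 * D2 k1 k2) kmax) kmax.

Definition Ffun P kmax q T1 T2 u := genf (Qq P kmax q) kmax T1 T2 u.
Definition Gfun P kmax q T1 T2 u := genf (Pq P q) kmax T1 T2 u.

Definition smallest_fix (f : R -> R) (u : R) : Prop :=
  0 <= u <= 1 /\ f u = u /\ (forall v, 0 <= v <= 1 -> f v = v -> u <= v).

(* u*(T2): the smallest fixed point (chosen by classical description;
   it exists since F is continuous on [0,1] and F(1)=1). *)
Definition ustar P kmax q T1 (T2 : R) : R :=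
  epsilon (inhabits 0) (fun u => smallest_fix (Ffun P kmax q T1 T2) u).

Definition psi P kmax q T1 (T2 : R) : R :=
  Gfun P kmax q T1 T2 (ustar P kmax q T1 T2).

From Stdlib Require Import Reals Lra Lia Psatz ClassicalEpsilon FunctionalExtensionality Classical.
Open Scope R_scope.

(* Thinning collapses both generating functions to one-variable polynomials:
   with f, g the generating functions of Q and P and a = (1 - q) T1 + q T2, we get
   psi = g (x a), where x a is the smallest fixed point in [0, 1] of
   h_a(y) = 1 - a (1 - f y).  When x a < 1 the graph of h_a crosses the diagonal
   transversally, a f'(x a) < 1, because the convex f lies strictly above its
   tangent there.  Hence x is continuous in a, and subtracting the fixed point
   equations at a and a0 yields x'(a0) = - (1 - f (x a0)) / (1 - a0 f'(x a0)) < 0,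
   so dpsi/dT2 = q g'(x a0) x'(a0) < 0. *)

Lemma sum_f_R0_zero_tail (g : nat -> R) (M N : nat) :
  (M <= N)%nat -> (forall j, (M < j <= N)%nat -> g j = 0) ->
  sum_f_R0 g N = sum_f_R0 g M.
Proof.
  intros HMN Hz. induction N as [|N IH].
  - replace M with 0%nat by lia. reflexivity.
  - destruct (Nat.eq_dec M (S N)) as [->|Hne]; [reflexivity|].
    rewrite tech5, IH, (Hz (S N)); [ring | lia | lia | intros; apply Hz; lia].
Qed.

Lemma sum_f_R0_triangle (f : nat -> nat -> R) (K : nat) :
  sum_f_R0 (fun i => sum_f_R0 (fun j => f i j) (K - i)) K =
  sum_f_R0 (fun n => sum_f_R0 (fun i => f i (n - i)%nat) n) K.
Proof.
  induction K as [|K IH]; [reflexivity|].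
  rewrite !tech5, <- IH, Nat.sub_diag.
  rewrite (sum_eq (fun i => sum_f_R0 (fun j => f i j) (S K - i))
             (fun i => sum_f_R0 (fun j => f i j) (K - i) + f i (S K - i)%nat)).
  - rewrite plus_sum. simpl. ring.
  - intros i Hi. replace (S K - i)%nat with (S (K - i)) by lia. apply tech5.
Qed.

(* Summing the thinned distribution along the antidiagonals k1 + k2 = n
   collapses each of them by the binomial theorem. *)
Lemma genf_thin (D : nat -> R) (K : nat) (q T1 T2 u : R) :
  (forall k, (K < k)%nat -> D k = 0) ->
  genf (thin D q) K T1 T2 u =
  sum_f_R0 (fun n => D n *
    ((1 - q) * (1 + (u - 1) * T1) + q * (1 + (u - 1) * T2)) ^ n) K.
Proof.
  intros HD. unfold genf, thin.
  set (y1 := 1 + (u - 1) * T1). set (y2 := 1 + (u - 1) * T2).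
  set (f := fun k1 k2 => y1 ^ k1 * y2 ^ k2 *
     (C (k1 + k2) k2 * q ^ k2 * (1 - q) ^ k1 * D (k1 + k2)%nat)).
  transitivity (sum_f_R0 (fun i => sum_f_R0 (fun j => f i j) (K - i)) K).
  - apply sum_eq. intros i Hi. apply sum_f_R0_zero_tail; [lia|].
    intros j Hj. unfold f. rewrite HD; [ring | lia].
  - rewrite sum_f_R0_triangle. apply sum_eq. intros n Hn.
    rewrite binomial, scal_sum. apply sum_eq. intros i Hi. unfold f.
    replace (i + (n - i))%nat with n by lia.
    rewrite <- pascal_step1, !Rpow_mult_distr by lia. ring.
Qed.

Definition pgf (D : nat -> R) (K : nat) (y : R) : R :=
  sum_f_R0 (fun k => D k * y ^ k) K.

Definition dpgf (D : nat -> R) (K : nat) (y : R) : R :=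
  sum_f_R0 (fun k => D k * (INR k * y ^ pred k)) K.

Lemma derivable_pt_lim_pgf (D : nat -> R) (K : nat) (y : R) :
  derivable_pt_lim (pgf D K) y (dpgf D K y).
Proof.
  unfold pgf, dpgf. induction K as [|K IH]; simpl.
  - apply (derivable_pt_lim_scal (fun y => y ^ 0)), derivable_pt_lim_pow.
  - apply derivable_pt_lim_plus; [exact IH|].
    apply (derivable_pt_lim_scal (fun y => y ^ S K)), derivable_pt_lim_pow.
Qed.

Lemma pgf_1 (D : nat -> R) (K : nat) : pgf D K 1 = sum_f_R0 D K.
Proof. unfold pgf. apply sum_eq. intros. rewrite pow1. ring. Qed.

Lemma pgf_range (D : nat -> R) (K : nat) (y : R) :
  (forall k, 0 <= D k) -> sum_f_R0 D K = 1 -> 0 <= y <= 1 -> 0 <= pgf D K y <= 1.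
Proof.
  intros HD HD1 Hy. rewrite <- HD1, <- pgf_1. unfold pgf. split.
  - apply cond_pos_sum. intros k. apply Rmult_le_pos; [apply HD | apply pow_le; lra].
  - apply sum_Rle. intros k _. apply Rmult_le_compat_l; [apply HD | apply pow_incr; lra].
Qed.

Lemma dpgf_pos (D : nat -> R) (K : nat) (x : R) :
  (forall k, 0 <= D k) -> 0 < sum_f_R0 (fun k => INR k * D k) K -> 0 < x <= 1 ->
  0 < dpgf D K x.
Proof.
  intros HD Hmean Hx.
  apply Rlt_le_trans with (sum_f_R0 (fun k => INR k * D k) K * x ^ K).
  - apply Rmult_lt_0_compat; [exact Hmean | apply pow_lt; lra].
  - unfold dpgf. rewrite Rmult_comm, scal_sum. apply sum_Rle. intros k Hk.
    assert (x ^ K <= x ^ pred k).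
    { replace K with (pred k + (K - pred k))%nat by lia. rewrite pow_add.
      assert (x ^ (K - pred k) <= 1) by (rewrite <- (pow1 (K - pred k)); apply pow_incr; lra).
      assert (0 <= x ^ pred k) by (apply pow_le; lra). nra. }
    assert (0 <= INR k * D k) by (apply Rmult_le_pos; [apply pos_INR | apply HD]).
    nra.
Qed.

Lemma sum_pgf_combination (D : nat -> R) (K : nat) (al be ga y : R) :
  sum_f_R0 (fun k => D k * (al + be * y ^ k + ga * (INR k * y ^ pred k))) K =
  al * sum_f_R0 D K + be * pgf D K y + ga * dpgf D K y.
Proof. unfold pgf, dpgf. induction K as [|K IH]; simpl; [|rewrite IH]; ring. Qed.

(* Convexity of [y ^ k] on [0, 1], in a form that is strict as soon as [k >= 2]. *)
Lemma pow_tangent_gap (k : nat) (x : R) : 0 <= x <= 1 ->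
  (1 - x) * (x - x ^ k) <= 1 - x ^ k - INR k * (1 - x) * x ^ pred k.
Proof.
  intros Hx. destruct k as [|n]; [simpl; nra|].
  induction n as [|n IH]; [simpl; lra|].
  simpl pred in *. rewrite S_INR.
  change (x ^ S (S n)) with (x * x ^ S n).
  change (x ^ S n) with (x * x ^ n) in *.
  assert (0 <= x ^ n) by (apply pow_le; lra).
  assert (1 <= INR (S n)) by (apply (le_INR 1); lia).
  assert (0 <= x ^ n * (1 - x) ^ 2 * (INR (S n) - x)) by
    (apply Rmult_le_pos; [apply Rmult_le_pos; nra | lra]).
  nra.
Qed.

(* The gap in the tangent inequality at [x] is bounded below by
   [(1 - x) (x - f x)], which is positive at a fixed point of
   [y |-> 1 - a (1 - f y)] with [a < 1]. *)
Lemma pgf_transversal (D : nat -> R) (K : nat) (x a : R) :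
  (forall k, 0 <= D k) -> sum_f_R0 D K = 1 -> 0 < x < 1 -> 0 < a < 1 ->
  1 - x = a * (1 - pgf D K x) -> a * dpgf D K x < 1.
Proof.
  intros HD HD1 Hx Ha Hfix.
  assert (Hgap :
    sum_f_R0 (fun k => D k * ((1 - x) * x + - (1 - x) * x ^ k + 0 * (INR k * x ^ pred k))) K <=
    sum_f_R0 (fun k => D k * (1 + -1 * x ^ k + - (1 - x) * (INR k * x ^ pred k))) K).
  { apply sum_Rle. intros k _. apply Rmult_le_compat_l; [apply HD|].
    pose proof (pow_tangent_gap k x ltac:(lra)). lra. }
  rewrite !sum_pgf_combination, HD1 in Hgap.
  assert (pgf D K x < x) by nra.
  assert (0 < (1 - x) * (x - pgf D K x)) by (apply Rmult_lt_0_compat; lra).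
  nra.
Qed.

Lemma continuity_pt_eps (F : R -> R) (x : R) :
  continuity_pt F x <-> forall e, 0 < e ->
    exists d, 0 < d /\ forall y, Rabs (y - x) < d -> Rabs (F y - F x) < e.
Proof.
  split.
  - intros H e He. destruct (H e He) as [d [Hd Hy]].
    exists d. split; [exact Hd|]. intros y Hyx.
    destruct (Req_dec y x) as [->|Hne].
    + rewrite Rminus_diag, Rabs_R0. exact He.
    + apply (Hy y). split; [split; [exact I | auto] | exact Hyx].
  - intros H e He. destruct (H e He) as [d [Hd Hy]].
    exists d. split; [exact Hd|]. intros y [_ Hyx]. apply Hy, Hyx.
Qed.

Section SmallestFixedPoint.

Variable F : R -> R.
Hypothesis F_cont : continuity F.
Hypothesis F0_ge0 : 0 <= F 0.

Lemma lt_smallest_fix (u v : R) : smallest_fix F u -> 0 <= v < u -> v < F v.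
Proof.
  intros [Hu [_ Hmin]] Hv. apply Rnot_le_lt. intro Hle.
  destruct (IVT_cor (fun w => w - F w) 0 v) as [z [Hz Hz0]].
  - apply continuity_minus; [apply derivable_continuous, derivable_id | exact F_cont].
  - lra.
  - cbv beta. nra.
  - assert (u <= z) by (apply Hmin; lra). lra.
Qed.

Lemma smallest_fix_le (u w : R) : smallest_fix F u -> 0 <= w <= 1 -> F w <= w -> u <= w.
Proof.
  intros Hu Hw Hfw. apply Rnot_lt_le. intro Hwu.
  assert (w < F w) by (apply (lt_smallest_fix u); [exact Hu | lra]). lra.
Qed.

(* The infimum of the fixed points in [0, 1] is a fixed point, by continuity. *)
Lemma smallest_fix_exists : F 1 = 1 -> exists u, smallest_fix F u.
Proof.
  intros F1.
  set (fixed := fun v => 0 <= v <= 1 /\ F v = v).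
  set (lower := fun w => forall v, fixed v -> w <= v).
  assert (lower_bounded : bound lower).
  { exists 1. intros w Hw. apply Hw. split; [lra | exact F1]. }
  assert (lower_inhabited : exists w, lower w).
  { exists 0. intros v [Hv _]. lra. }
  destruct (completeness lower lower_bounded lower_inhabited) as [m [m_ub m_lub]].
  assert (m_lower : lower m) by (intros v Hv; apply m_lub; intros w Hw; apply Hw, Hv).
  assert (Hm : 0 <= m <= 1).
  { split; [apply m_ub; intros v [Hv _]; lra | apply m_lower; split; [lra | exact F1]]. }
  assert (fixed_near : forall e, 0 < e -> exists v, fixed v /\ v < m + e).
  { intros e He. apply NNPP. intro Hno.
    assert (m + e <= m); [|lra].
    apply m_ub. intros v Hv. apply Rnot_lt_le. intro Hlt. apply Hno. eauto. }
  exists m. split; [exact Hm|]. split; [|intros v Hv Hfv; apply m_lower; split; auto].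
  apply NNPP. intro Hne.
  set (e := Rabs (F m - m) / 2).
  assert (He : 0 < e) by (apply Rdiv_lt_0_compat; [apply Rabs_pos_lt; lra | lra]).
  destruct (proj1 (continuity_pt_eps F m) (F_cont m) e He) as [d [Hd Hcont]].
  destruct (fixed_near (Rmin d e) (Rmin_pos _ _ Hd He)) as [v [[Hv Hfv] Hvm]].
  assert (m <= v) by (apply m_lower; split; auto).
  assert (Hvd : Rabs (v - m) < d) by (rewrite Rabs_right; [pose proof (Rmin_l d e) | ]; lra).
  assert (Hve : Rabs (v - m) < e) by (rewrite Rabs_right; [pose proof (Rmin_r d e) | ]; lra).
  specialize (Hcont v Hvd). rewrite Hfv in Hcont.
  pose proof (Rabs_triang (F m - v) (v - m)).
  replace (F m - v + (v - m)) with (F m - m) in * by ring.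
  rewrite Rabs_minus_sym in Hcont. unfold e in *. lra.
Qed.

End SmallestFixedPoint.

(* Carathéodory's formulation of differentiability. *)
Definition slope (f : R -> R) (x l y : R) : R :=
  if Req_dec_T y x then l else (f y - f x) / (y - x).

Lemma slope_spec (f : R -> R) (x l y : R) : f y - f x = slope f x l y * (y - x).
Proof.
  unfold slope. destruct (Req_dec_T y x) as [->|Hne]; [ring | field; lra].
Qed.

Lemma slope_at (f : R -> R) (x l : R) : slope f x l x = l.
Proof. unfold slope. destruct (Req_dec_T x x); [reflexivity | congruence]. Qed.

Lemma continuity_pt_slope (f : R -> R) (x l : R) :
  derivable_pt_lim f x l -> continuity_pt (slope f x l) x.
Proof.
  intros Hf. apply continuity_pt_eps. intros e He.
  destruct (Hf e He) as [d Hd]. exists d. split; [apply cond_pos|].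
  intros y Hy. rewrite slope_at. unfold slope.
  destruct (Req_dec_T y x) as [->|Hne]; [rewrite Rminus_diag, Rabs_R0; exact He|].
  specialize (Hd (y - x) ltac:(lra) Hy). replace (x + (y - x)) with y in Hd by ring. exact Hd.
Qed.

Lemma derivable_pt_lim_of_slope (g phi : R -> R) (x d : R) :
  0 < d -> (forall y, Rabs (y - x) < d -> g y - g x = phi y * (y - x)) ->
  continuity_pt phi x -> derivable_pt_lim g x (phi x).
Proof.
  intros Hd Hg Hphi e He.
  destruct (proj1 (continuity_pt_eps phi x) Hphi e He) as [d' [Hd' Hc]].
  exists (mkposreal _ (Rmin_pos _ _ Hd Hd')). simpl. intros h Hh0 Hh.
  assert (Hh' : Rabs (x + h - x) < Rmin d d') by (replace (x + h - x) with h by ring; exact Hh).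
  rewrite (Hg (x + h)) by (pose proof (Rmin_l d d'); lra).
  replace (phi (x + h) * (x + h - x) / h) with (phi (x + h)) by (field; exact Hh0).
  apply Hc. pose proof (Rmin_r d d'). lra.
Qed.

Lemma derivable_pt_lim_neg_right (phi : R -> R) (x l : R) :
  derivable_pt_lim phi x l -> l < 0 ->
  forall e, 0 < e -> exists y, x < y <= x + e /\ phi y < phi x.
Proof.
  intros Hphi Hl e He.
  destruct (Hphi (- l / 2) ltac:(lra)) as [d Hd].
  set (h := Rmin (d / 2) e).
  assert (Hh : 0 < h) by (apply Rmin_pos; [pose proof (cond_pos d) |]; lra).
  assert (Hhd : h <= d / 2) by apply Rmin_l.
  assert (Hhe : h <= e) by apply Rmin_r.
  exists (x + h). split; [lra|].
  specialize (Hd h ltac:(lra) ltac:(rewrite Rabs_right; pose proof (cond_pos d); lra)).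
  apply Rabs_def2 in Hd. destruct Hd as [Hd _].
  assert (Hq : (phi (x + h) - phi x) / h < 0) by lra.
  assert (phi (x + h) - phi x = (phi (x + h) - phi x) / h * h) by (field; lra).
  nra.
Qed.

Section FixedPointFamily.

Variables f fd : R -> R.
Hypothesis f_deriv : forall y, derivable_pt_lim f y (fd y).
Hypothesis f_range : forall y, 0 <= y <= 1 -> 0 <= f y <= 1.
Hypothesis f_1 : f 1 = 1.
Hypothesis f_transversal : forall x a, 0 < x < 1 -> 0 < a < 1 ->
  1 - x = a * (1 - f x) -> a * fd x < 1.

Lemma f_cont : continuity f.
Proof. intro y. apply derivable_continuous_pt. exists (fd y). apply f_deriv. Qed.

Definition ufix (a : R) : R :=
  epsilon (inhabits 0) (smallest_fix (fun u => f (1 + (u - 1) * a))).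

(* In the variable [x = 1 + (u - 1) a], fixed points of [u |-> f (1 + (u - 1) a)]
   become fixed points of [hmap a], in which the parameter enters linearly. *)
Definition xfix (a : R) : R := 1 + (ufix a - 1) * a.

Definition hmap (a x : R) : R := 1 - a * (1 - f x).

Lemma ufix_spec (a : R) : smallest_fix (fun u => f (1 + (u - 1) * a)) (ufix a).
Proof.
  unfold ufix. apply epsilon_spec, smallest_fix_exists.
  - intro u. apply (continuity_pt_comp (fun u => 1 + (u - 1) * a) f); [|apply f_cont].
    reg.
  - replace (1 + (1 - 1) * a) with 1 by ring. exact f_1.
Qed.

Lemma xfix_spec (a : R) : 0 < a <= 1 -> smallest_fix (hmap a) (xfix a).
Proof.
  intros Ha. destruct (ufix_spec a) as [Hu [Hfu Hmin]].
  unfold xfix, hmap. split; [nra|]. split; [rewrite Hfu; ring|].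
  intros x Hx Hfx.
  pose proof (f_range x Hx).
  assert (Hux : f (1 + (f x - 1) * a) = f x).
  { f_equal. lra. }
  assert (ufix a <= f x) by (apply Hmin; [lra | exact Hux]).
  nra.
Qed.

Lemma hmap_0_ge0 (a : R) : 0 <= a <= 1 -> 0 <= hmap a 0.
Proof. intros Ha. unfold hmap. pose proof (f_range 0 ltac:(lra)). nra. Qed.

Lemma hmap_cont (a : R) : continuity (hmap a).
Proof. unfold hmap. intro x. pose proof f_cont. reg. Qed.

Lemma derivable_pt_lim_hmap (a x : R) : derivable_pt_lim (hmap a) x (a * fd x).
Proof.
  unfold hmap. replace (a * fd x) with (0 - a * (0 - fd x)) by ring.
  apply (derivable_pt_lim_minus (fun _ => 1) (fun x => a * (1 - f x))).
  - apply derivable_pt_lim_const.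
  - apply (derivable_pt_lim_scal (fun x => 1 - f x)).
    apply (derivable_pt_lim_minus (fun _ => 1) f); [apply derivable_pt_lim_const | apply f_deriv].
Qed.

Lemma hmap_param_lipschitz (a b y : R) : 0 <= y <= 1 ->
  Rabs (hmap a y - hmap b y) <= Rabs (a - b).
Proof.
  intros Hy. pose proof (f_range y Hy). unfold hmap.
  replace (1 - a * (1 - f y) - (1 - b * (1 - f y))) with ((b - a) * (1 - f y)) by ring.
  rewrite Rabs_mult, Rabs_minus_sym, (Rabs_right (1 - f y)) by lra.
  pose proof (Rabs_pos (a - b)). nra.
Qed.

Lemma xfix_range (a : R) : 0 < a < 1 -> 1 - a <= xfix a <= 1.
Proof.
  intros Ha. destruct (xfix_spec a ltac:(lra)) as [Hx [Hfix _]].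
  pose proof (f_range _ Hx). unfold hmap in Hfix. nra.
Qed.

Section AtParameter.

Variable a0 : R.
Hypothesis a0_range : 0 < a0 < 1.
Hypothesis xfix_a0_lt1 : xfix a0 < 1.

Let x0 := xfix a0.

Lemma x0_fixed : hmap a0 x0 = x0.
Proof. destruct (xfix_spec a0 ltac:(lra)) as [_ [Hfix _]]. exact Hfix. Qed.

Lemma x0_range : 0 < x0 < 1.
Proof. pose proof (xfix_range a0 a0_range). unfold x0. lra. Qed.

Lemma x0_transversal : a0 * fd x0 < 1.
Proof.
  apply f_transversal; [exact x0_range | exact a0_range |].
  pose proof x0_fixed. unfold hmap in *. lra.
Qed.

(* Transversality makes [hmap a0] cross the diagonal downwards just after [x0];
   such a crossing survives small changes of the parameter. *)
Lemma xfix_upper (e : R) : 0 < e ->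
  exists d, 0 < d /\ forall a, 0 < a < 1 -> Rabs (a - a0) < d -> xfix a <= x0 + e.
Proof.
  intros He. pose proof x0_range. pose proof x0_transversal.
  destruct (derivable_pt_lim_neg_right (fun x => hmap a0 x - x) x0 (a0 * fd x0 - 1))
    with (e := Rmin e (1 - x0)) as [y [Hy Hcross]].
  - apply derivable_pt_lim_minus; [apply derivable_pt_lim_hmap | apply derivable_pt_lim_id].
  - lra.
  - apply Rmin_pos; lra.
  - pose proof (Rmin_l e (1 - x0)). pose proof (Rmin_r e (1 - x0)). pose proof x0_fixed.
    exists (y - hmap a0 y). split; [lra|]. intros a Ha Had.
    assert (Hyr : 0 <= y <= 1) by lra.
    pose proof (hmap_param_lipschitz a a0 y Hyr).
    pose proof (Rle_abs (hmap a y - hmap a0 y)).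
    assert (xfix a <= y); [|lra].
    apply (smallest_fix_le (hmap a)); [apply hmap_cont | apply hmap_0_ge0; lra |
      apply xfix_spec; lra | exact Hyr | lra].
Qed.

(* Below [x0], [hmap a0 x - x] is positive, hence bounded away from 0 on
   [0, x0 - e] by compactness; small changes of the parameter keep it positive. *)
Lemma xfix_lower (e : R) : 0 < e ->
  exists d, 0 < d /\ forall a, 0 < a < 1 -> Rabs (a - a0) < d -> x0 - e <= xfix a.
Proof.
  intros He.
  destruct (Rlt_le_dec (x0 - e) 0) as [Hneg | Hpos].
  - exists 1. split; [lra|]. intros a Ha _. pose proof (xfix_range a Ha). lra.
  - set (phi := fun x => hmap a0 x - x).
    destruct (continuity_ab_min phi 0 (x0 - e) Hpos) as [xm [Hmin Hxm]].
    { intros c _. apply continuity_pt_minus; [apply hmap_cont | apply derivable_continuous_pt, derivable_pt_id]. }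
    assert (Hm : 0 < phi xm).
    { unfold phi. assert (xm < hmap a0 xm); [|lra].
      apply (lt_smallest_fix (hmap a0) (hmap_cont a0) (hmap_0_ge0 a0 ltac:(lra)) x0);
        [apply xfix_spec | ]; lra. }
    exists (phi xm). split; [exact Hm|]. intros a Ha Had.
    apply Rnot_lt_le. intro Hlt.
    destruct (xfix_spec a ltac:(lra)) as [Hx [Hfix _]].
    assert (Hxr : 0 <= xfix a <= x0 - e) by lra.
    specialize (Hmin (xfix a) Hxr).
    pose proof (hmap_param_lipschitz a0 a (xfix a) Hx).
    pose proof (Rle_abs (hmap a0 (xfix a) - hmap a (xfix a))).
    rewrite Rabs_minus_sym in Had. unfold phi in *. lra.
Qed.

Lemma continuity_pt_xfix : continuity_pt xfix a0.
Proof.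
  apply continuity_pt_eps. intros e He.
  destruct (xfix_upper (e / 2) ltac:(lra)) as [d1 [Hd1 Hup]].
  destruct (xfix_lower (e / 2) ltac:(lra)) as [d2 [Hd2 Hlow]].
  exists (Rmin (Rmin d1 d2) (Rmin a0 (1 - a0))).
  split; [repeat apply Rmin_pos; lra|]. intros a Ha.
  pose proof (Rmin_l (Rmin d1 d2) (Rmin a0 (1 - a0))).
  pose proof (Rmin_r (Rmin d1 d2) (Rmin a0 (1 - a0))).
  pose proof (Rmin_l d1 d2). pose proof (Rmin_r d1 d2).
  pose proof (Rmin_l a0 (1 - a0)). pose proof (Rmin_r a0 (1 - a0)).
  apply Rabs_def2 in Ha as Ha'.
  assert (Hr : 0 < a < 1) by lra.
  specialize (Hup a Hr ltac:(lra)). specialize (Hlow a Hr ltac:(lra)).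
  apply Rabs_def1; fold x0; lra.
Qed.

(* Subtracting the fixed point equations at [a] and [a0] gives
   [(x - x0) (1 - a0 S(x)) = - (a - a0) (1 - f x)] with [x = xfix a] and [S] the
   slope of [f] at [x0]; the quotient is continuous at [a0] since [xfix] is. *)
Lemma derivable_pt_lim_xfix : exists l, derivable_pt_lim xfix a0 l /\ l < 0.
Proof.
  pose proof x0_range as Hx0. pose proof x0_transversal as Htr.
  set (S := slope f x0 (fd x0)).
  set (den := fun a => 1 - a0 * S (xfix a)).
  set (phi := fun a => - (1 - f (xfix a)) / den a).
  assert (Hden0 : den a0 = 1 - a0 * fd x0) by (unfold den, S; fold x0; rewrite slope_at; reflexivity).
  assert (Hden_c : continuity_pt den a0).
  { apply continuity_pt_minus; [apply continuity_pt_const; intros ? ?; reflexivity|].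
    apply continuity_pt_mult; [apply continuity_pt_const; intros ? ?; reflexivity|].
    apply (continuity_pt_comp xfix S); [apply continuity_pt_xfix | apply continuity_pt_slope, f_deriv]. }
  assert (Hphi_c : continuity_pt phi a0).
  { apply continuity_pt_div; [|exact Hden_c | lra].
    apply continuity_pt_opp, continuity_pt_minus; [apply continuity_pt_const; intros ? ?; reflexivity|].
    apply (continuity_pt_comp xfix f); [apply continuity_pt_xfix | apply f_cont]. }
  destruct (continuous_neq_0 den a0 Hden_c ltac:(lra)) as [eps Hden].
  assert (Hd : exists d, 0 < d /\ d <= eps /\ d <= a0 /\ d <= 1 - a0).
  { exists (Rmin eps (Rmin a0 (1 - a0))).
    pose proof (cond_pos eps). pose proof (Rmin_l eps (Rmin a0 (1 - a0))).
    pose proof (Rmin_r eps (Rmin a0 (1 - a0))).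
    pose proof (Rmin_l a0 (1 - a0)). pose proof (Rmin_r a0 (1 - a0)).
    split; [repeat apply Rmin_pos|]; lra. }
  destruct Hd as [d Hd].
  exists (phi a0). split.
  - apply (derivable_pt_lim_of_slope xfix phi a0 d); [lra | | exact Hphi_c].
    intros a Ha. apply Rabs_def2 in Ha as Ha'.
    assert (Hdena : den a <> 0).
    { replace a with (a0 + (a - a0)) by ring. apply Hden. lra. }
    destruct (xfix_spec a ltac:(lra)) as [_ [Hfix _]].
    pose proof x0_fixed as Hfix0. pose proof (slope_spec f x0 (fd x0) (xfix a)) as Hslope.
    fold x0. unfold phi. fold S in Hslope.
    apply (Rmult_eq_reg_r (den a)); [|exact Hdena].
    replace (- (1 - f (xfix a)) / den a * (a - a0) * den a) with (- (1 - f (xfix a)) * (a - a0))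
      by (field; exact Hdena).
    unfold den, hmap in *. nra.
  - unfold phi. rewrite Hden0. fold x0.
    assert (0 < 1 - f x0) by (pose proof x0_fixed; unfold hmap in *; nra).
    assert (0 < (1 - f x0) / (1 - a0 * fd x0)) by (apply Rdiv_lt_0_compat; lra).
    unfold Rdiv in *. rewrite Ropp_mult_distr_l_reverse. lra.
Qed.

End AtParameter.

End FixedPointFamily.

Lemma Qd_ge0 (P : nat -> R) (K : nat) :
  (forall k, 0 <= P k) -> 0 < meank P K -> forall k, 0 <= Qd P K k.
Proof.
  intros HP Hm k. unfold Qd. apply Rmult_le_pos; [apply Rmult_le_pos; [apply pos_INR | apply HP]|].
  left. apply Rinv_0_lt_compat, Hm.
Qed.

Lemma sum_Qd (P : nat -> R) (K : nat) :
  (forall k, (K < k)%nat -> P k = 0) -> 0 < meank P K -> sum_f_R0 (Qd P K) K = 1.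
Proof.
  intros HPsupp Hm.
  assert (Hshift : sum_f_R0 (fun k => INR (S k) * P (S k)) K = meank P K).
  { unfold meank. rewrite <- (sum_f_R0_zero_tail (fun k => INR k * P k) K (S K)).
    - rewrite (decomp_sum _ (S K)) by lia. simpl. ring.
    - lia.
    - intros j Hj. rewrite HPsupp by lia. ring. }
  unfold Qd. transitivity (/ meank P K * sum_f_R0 (fun k => INR (S k) * P (S k)) K).
  - rewrite scal_sum. apply sum_eq. intros. rewrite Nat.add_1_r. unfold Rdiv. ring.
  - rewrite Hshift. field. lra.
Qed.

Lemma Ffun_eq (P : nat -> R) (K : nat) (q T1 s : R) :
  (forall k, (K < k)%nat -> P k = 0) ->
  Ffun P K q T1 s = fun u => pgf (Qd P K) K (1 + (u - 1) * ((1 - q) * T1 + q * s)).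
Proof.
  intros HPsupp. apply functional_extensionality. intro u. unfold Ffun, Qq.
  rewrite genf_thin.
  - unfold pgf. apply sum_eq. intros. do 2 f_equal. ring.
  - intros k Hk. unfold Qd. rewrite HPsupp by lia. unfold Rdiv. ring.
Qed.

Lemma Gfun_eq (P : nat -> R) (K : nat) (q T1 s u : R) :
  (forall k, (K < k)%nat -> P k = 0) ->
  Gfun P K q T1 s u = pgf P K (1 + (u - 1) * ((1 - q) * T1 + q * s)).
Proof.
  intros HPsupp. unfold Gfun, Pq. rewrite genf_thin by exact HPsupp.
  unfold pgf. apply sum_eq. intros. do 2 f_equal. ring.
Qed.

Lemma psi_eq (P : nat -> R) (K : nat) (q T1 : R) :
  (forall k, (K < k)%nat -> P k = 0) ->
  psi P K q T1 = comp (pgf P K) (comp (xfix (pgf (Qd P K) K)) (fun s => (1 - q) * T1 + q * s)).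
Proof.
  intros HPsupp. apply functional_extensionality. intro s.
  unfold psi, ustar, comp. rewrite Gfun_eq, Ffun_eq by exact HPsupp. reflexivity.
Qed.

Lemma derivable_pt_lim_affine (c q s : R) : derivable_pt_lim (fun s => c + q * s) s q.
Proof.
  pose proof (derivable_pt_lim_plus (fun _ => c) (mult_real_fct q id) s 0 (q * 1)
    (derivable_pt_lim_const c s) (derivable_pt_lim_scal id q s 1 (derivable_pt_lim_id s))) as H.
  replace (0 + q * 1) with q in H by ring. exact H.
Qed.

Theorem lemma4 (P : nat -> R) (kmax : nat)
  (HPnn : forall k, 0 <= P k)
  (HPsupp : forall k, (kmax < k)%nat -> P k = 0)
  (HPsum : sum_f_R0 P kmax = 1)
  (Hmean : 0 < meank P kmax)
  (T1 q : R) (HT1 : 0 < T1 < 1) (Hq : 0 < q <= 1)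
  (T2 : R) (HT2 : 0 < T2 < 1)
  (Hpsi : 0 <= psi P kmax q T1 T2 < 1) :
  exists l : R, derivable_pt_lim (psi P kmax q T1) T2 l /\ l < 0.
Proof.
  set (QD := Qd P kmax). set (a0 := (1 - q) * T1 + q * T2).
  pose proof (Qd_ge0 P kmax HPnn Hmean) as HQnn.
  pose proof (sum_Qd P kmax HPsupp Hmean) as HQsum.
  assert (Hrange : forall y, 0 <= y <= 1 -> 0 <= pgf QD kmax y <= 1) by (intros; apply pgf_range; auto).
  assert (H1 : pgf QD kmax 1 = 1) by (rewrite pgf_1; exact HQsum).
  assert (Htrans := fun x a => pgf_transversal QD kmax x a HQnn HQsum).
  assert (Ha0 : 0 < a0 < 1) by (unfold a0; split; nra).
  set (x0 := xfix (pgf QD kmax) a0).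
  pose proof (xfix_range _ _ (derivable_pt_lim_pgf QD kmax) Hrange H1 a0 Ha0) as Hx0. fold x0 in Hx0.
  assert (Hpsi_x0 : psi P kmax q T1 T2 = pgf P kmax x0) by (rewrite psi_eq by exact HPsupp; reflexivity).
  assert (Hx0_lt1 : x0 < 1).
  { apply Rnot_le_lt. intro Hge. replace x0 with 1 in Hpsi_x0 by lra.
    rewrite pgf_1, HPsum in Hpsi_x0. lra. }
  destruct (derivable_pt_lim_xfix _ _ (derivable_pt_lim_pgf QD kmax) Hrange H1 Htrans a0 Ha0 Hx0_lt1)
    as [l [Hl Hl_neg]].
  exists (dpgf P kmax x0 * (l * q)). split.
  - rewrite psi_eq by exact HPsupp.
    apply derivable_pt_lim_comp; [|apply derivable_pt_lim_pgf].
    apply derivable_pt_lim_comp; [apply derivable_pt_lim_affine | exact Hl].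
  - pose proof (dpgf_pos P kmax x0 HPnn Hmean ltac:(lra)).
    assert (l * q < 0) by nra. nra.
Qed.
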